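(* For all $2$-admissible integers $n > 1$, any partial $2$-star design of order $n$ with $n-3$ stars is completable.
   Context: A $2$-star is a copy of $K_{1,2}$ (a path with two edges). A partial $2$-star design of order $n$ is a pair $(V,\mathcal{A})$ where $V$ is a set of $n$ vertices and $\mathcal{A}$ is a set of edge-disjoint $2$-stars that are subgraphs of the complete graph $K_V$; it is completable if there is a set $\mathcal{B}\supseteq\mathcal{A}$ of edge-disjoint $2$-stars in $K_V$ whose edges cover all edges of $K_V$. A positive integer $n$ is $2$-admissible if $\binom{n}{2}$ is even. *)

From mathcomp Require Import all_boot.
Set Implicit Arguments. Unset Strict Implicit. Unset Printing Implicit Defensive.

Definition is_edge (n : nat) (e : {set 'I_n}) : bool := #|e| == 2.

(* A 2-star (copy of K_{1,2}) is given by a triple (c, a, b): centre c and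
   leaves a, b, pairwise distinct.  As a subgraph of K_V it is identified with
   its edge set {{c,a},{c,b}}. *)
Definition star (n : nat) := ('I_n * 'I_n * 'I_n)%type.

Definition valid_star (n : nat) (s : star n) : bool :=
  let: (c, a, b) := s in [&& c != a, c != b & a != b].

Definition star_edges (n : nat) (s : star n) : {set {set 'I_n}} :=
  let: (c, a, b) := s in [set [set c; a]; [set c; b]].

(* Edge-disjointness forces distinct indices to give distinct stars, so this
   faithfully represents a set of k edge-disjoint 2-stars in K_V. *)
Definition edge_disjoint_stars (n k : nat) (A : 'I_k -> star n) : Prop :=
  (forall i, valid_star (A i)) /\
  (forall i j, i != j -> star_edges (A i) :&: star_edges (A j) = set0).

Definition partial_2star_design (n k : nat) (A : 'I_k -> star n) : Prop :=
  edge_disjoint_stars A.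

Definition completable (n k : nat) (A : 'I_k -> star n) : Prop :=
  exists (m : nat) (B : 'I_m -> star n),
    edge_disjoint_stars B /\
    (forall i : 'I_k, exists j : 'I_m, star_edges (B j) = star_edges (A i)) /\
    (forall e : {set 'I_n}, is_edge e -> exists j : 'I_m, e \in star_edges (B j)).

Definition two_admissible (n : nat) : bool := (0 < n) && ~~ odd 'C(n, 2).

From mathcomp Require Import all_boot zify.
Set Implicit Arguments. Unset Strict Implicit. Unset Printing Implicit Defensive.

(* The edges not covered by the n - 3 given stars form a graph H with
   'C(n, 2) - 2(n - 3) edges, an even number.  H is connected apart from its
   isolated vertices: a cut with at least two vertices on each side separates
   at least 2n - 4 > 2(n - 3) pairs, so one of them is an edge of H.  Such a
   graph splits into 2-stars: orient it so that every indegree is even (start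
   from any orientation and reverse paths joining two vertices of odd
   indegree), then pair off the edges entering each vertex. *)

Section Graphs.
Variable T : finType.
Implicit Types (G M : {set {set T}}) (h : {set T} -> T) (e f : {set T}) (u v w x y : T).

Definition edge_rel G : rel T := fun x y => [set x; y] \in G.

(* An orientation of [G] is encoded by the map sending each edge to its head. *)
Definition orientation G h := forall e, e \in G -> h e \in e.

Definition indeg G h w := \sum_(e in G) (h e == w).

Definition compl_graph M := [set e : {set T} | #|e| == 2] :\: M.

Lemma orientation_exists G (x0 : T) : set0 \notin G -> exists h, orientation G h.
Proof.
move=> G0; exists (fun e => odflt x0 [pick x in e]) => e eG.
case: pickP => [x //|none]; case/negP: G0.
by rewrite -(_ : e = set0) //; apply/setP => x; rewrite inE none.
Qed.

Lemma sum_indeg G h : \sum_w indeg G h w = #|G|.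
Proof.
rewrite /indeg exchange_big /= -sum1_card; apply: eq_bigr => e _.
by rewrite (bigD1 (h e)) //= eqxx big1 // => w /negPf; rewrite eq_sym => ->.
Qed.

Lemma indegD1 G h f w : f \in G -> indeg G h w = (h f == w) + indeg (G :\ f) h w.
Proof. by move=> fG; rewrite /indeg (big_setD1 _ fG). Qed.

Lemma eq_indeg G h h' w : {in G, h =1 h'} -> indeg G h w = indeg G h' w.
Proof. by move=> hh'; apply: eq_bigr => e /hh' ->. Qed.

Lemma reverse_edge G h x y : orientation G h -> [set x; y] \in G ->
  exists2 h', orientation G h' &
    forall w, odd (indeg G h' w) = odd (indeg G h w) (+) (w == x) (+) (w == y).
Proof.
set f := [set x; y] => hG fG.
pose h' e := if e == f then (if h f == x then y else x) else h e.
exists h' => [e eG | w].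
  rewrite /h'; case: eqP => [->|_]; last exact: hG.
  by case: ifP; rewrite !inE eqxx ?orbT.
rewrite !(indegD1 _ _ fG) (@eq_indeg _ h' h); last first.
  by move=> e; rewrite in_setD1 /h' => /andP[/negPf ->].
rewrite !oddD !oddb /h' eqxx !(eq_sym w).
have := hG _ fG; rewrite !inE => /orP[] /eqP ->; rewrite ?eqxx.
  by case: (x == w); case: (y == w); case: odd.
have -> : (if y == x then y else x) = x by case: eqP.
by case: (x == w); case: (y == w); case: odd.
Qed.

Lemma reverse_path G h x p : orientation G h -> path (edge_rel G) x p ->
  exists2 h', orientation G h' &
    forall w, odd (indeg G h' w) = odd (indeg G h w) (+) (w == x) (+) (w == last x p).
Proof.
elim: p x h => [|y p IH] x h hG /=.
  by move=> _; exists h => // w; rewrite -addbA addbb addbF.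
case/andP=> xyG yp; have [h1 h1G odd_h1] := reverse_edge hG xyG.
have [h' h'G odd_h'] := IH y h1 h1G yp.
exists h' => // w; rewrite odd_h' odd_h1.
by case: (w == x); case: (w == y); case: (w == last y p); case: odd.
Qed.

Lemma odd_indeg_cover G h w : orientation G h -> odd (indeg G h w) -> w \in cover G.
Proof.
move=> hG; apply: contraTT => wG; rewrite /indeg big1 // => e eG.
apply/eqP; rewrite eqb0; apply: contraNN wG => /eqP <-.
by apply/bigcupP; exists e; rewrite ?hG.
Qed.

Lemma odd_indeg_partner G h w : ~~ odd #|G| -> odd (indeg G h w) ->
  exists2 w', w' != w & odd (indeg G h w').
Proof.
move=> evenG oddw.
have [/existsP[w' /andP[w'w oddw']] | /existsPn even_others] :=
  boolP [exists w', (w' != w) && odd (indeg G h w')]; first by exists w'.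
case/negP: evenG; rewrite -(sum_indeg G h) (bigD1 w) //= oddD oddw /=.
apply: (big_ind (fun m => ~~ odd m)) => // [a b | v vw].
  by rewrite oddD => /negPf-> /negPf->.
by move: (even_others v); rewrite vw.
Qed.

Lemma even_orientation G h : ~~ odd #|G| ->
    {in cover G &, forall u v, connect (edge_rel G) u v} -> orientation G h ->
  exists2 h', orientation G h' & forall w, ~~ odd (indeg G h' w).
Proof.
move=> evenG connG; have [k] := ubnP #|[set w | odd (indeg G h w)]|.
elim: k h => // k IH h lt_k hG.
have [/existsP[w oddw] | /existsPn] :=
  boolP [exists w, odd (indeg G h w)]; last by exists h.
have [w' w'w oddw'] := odd_indeg_partner evenG oddw.
have /connectP[p pG lastp] :=
  connG _ _ (odd_indeg_cover hG oddw) (odd_indeg_cover hG oddw').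
have [h' h'G odd_h'] := reverse_path hG pG.
rewrite ltnS in lt_k; apply: (IH h') => //; apply: leq_trans lt_k; apply: proper_card.
apply/properP; split.
  apply/subsetP => z; rewrite !inE odd_h' -lastp.
  by case: eqVneq => [->|_] //; case: eqVneq => [->|_]; rewrite ?addbF.
by exists w; rewrite !inE ?odd_h' -?lastp ?oddw // eqxx eq_sym (negPf w'w).
Qed.

Lemma second_edge_at_head G h e : e \in G -> ~~ odd (indeg G h (h e)) ->
  exists2 e', e' \in G :\ e & h e' = h e.
Proof.
move=> eG; rewrite (indegD1 _ _ eG) eqxx.
have [/existsP[e' /andP[e'G /eqP]] | /existsPn none] :=
  boolP [exists e', (e' \in G :\ e) && (h e' == h e)]; first by exists e'.
rewrite /indeg big1 // => e' e'G; apply/eqP; rewrite eqb0.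
by have := none e'; rewrite e'G.
Qed.

Lemma edge_other_end e v : #|e| == 2 -> v \in e -> exists2 a, a != v & e = [set v; a].
Proof.
case/cards2P=> x [y [xy ->]]; rewrite !inE => /orP[] /eqP ->.
  by exists y; rewrite // eq_sym.
by exists x; rewrite // setUC.
Qed.

Lemma cover_neighbour G x : {in G, forall e, #|e| == 2} -> x \in cover G ->
  exists2 y, y != x & edge_rel G x y.
Proof.
move=> G2 /bigcupP[e eG xe]; have [y yx ey] := edge_other_end (G2 _ eG) xe.
by exists y; rewrite // /edge_rel -ey.
Qed.

Lemma compl_graph_card2 M : {in compl_graph M, forall e, #|e| == 2}.
Proof. by move=> e; rewrite !inE => /andP[_]. Qed.

Lemma card_compl_graph M : M \subset [set e : {set T} | #|e| == 2] ->
  #|M| + #|compl_graph M| = 'C(#|T|, 2).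
Proof.
by move=> M2; rewrite -card_draws -(cardsID M [set e : {set T} | #|e| == 2]) (setIidPr M2).
Qed.

Lemma card_cut_pairs (C : {set T}) :
  #|[set [set p.1; p.2] | p in setX C (~: C)]| = #|C| * #|~: C|.
Proof.
rewrite card_in_imset ?cardsX // => -[c d] [c' d'] /setXP[/= cC dC] /setXP[/= c'C d'C].
move=> /= eq_cd.
have : c \in [set c'; d'] by rewrite -eq_cd set21.
rewrite !inE => /orP[/eqP-> | /eqP cd']; last by rewrite -cd' inE cC in d'C.
have : d \in [set c'; d'] by rewrite -eq_cd set22.
rewrite !inE => /orP[/eqP dc' | /eqP-> //]; by rewrite dc' inE c'C in dC.
Qed.

Lemma compl_graph_connected M : #|M| + 4 < 2 * #|T| ->
  {in cover (compl_graph M) &, forall u v, connect (edge_rel (compl_graph M)) u v}.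
Proof.
set H := compl_graph M => small_M u v uH vH; apply/negPn/negP => nuv.
have H2 := @compl_graph_card2 M.
set C := [set w | connect (edge_rel H) u w].
have cut_in_M c d : c \in C -> d \notin C -> [set c; d] \in M.
  move=> cC dC; have cd : c != d by apply: contraNneq dC => <-.
  apply: contraNT dC => cdM; rewrite !inE in cC *.
  by apply: connect_trans cC (connect1 _); rewrite /edge_rel !inE cdM cards2 cd.
have [u' u'u uu'] := cover_neighbour H2 uH.
have [v' v'v vv'] := cover_neighbour H2 vH.
have vC : v \notin C by rewrite inE.
have v'C : v' \notin C.
  apply: contra vC; rewrite !inE => uv'; apply: connect_trans uv' (connect1 _).
  by rewrite /edge_rel setUC.
have C_gt1 : 1 < #|C|.
  by apply/card_gt1P; exists u, u'; rewrite !inE connect0 connect1 // eq_sym.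
have notC_gt1 : 1 < #|~: C|.
  by apply/card_gt1P; exists v, v'; rewrite !in_setC vC v'C eq_sym.
have cut_le : #|C| * #|~: C| <= #|M|.
  rewrite -card_cut_pairs; apply: subset_leq_card; apply/subsetP => x.
  by case/imsetP=> -[c d] /setXP[/= cC]; rewrite in_setC => dC ->; apply: cut_in_M.
have := cardsC C; move: small_M cut_le C_gt1 notC_gt1; nia.
Qed.

End Graphs.

Section Stars.
Variable n : nat.
Implicit Types (G : {set {set 'I_n}}) (h : {set 'I_n} -> 'I_n) (e : {set 'I_n}).
Implicit Types (t : star n) (s : seq (star n)).

Definition disjoint_stars t t' := [disjoint star_edges t & star_edges t'].

Definition star_decomposition G s : Prop :=
  [/\ all (@valid_star n) s, pairwise disjoint_stars s & G = \bigcup_(t <- s) star_edges t].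

Lemma even_orientation_star_decomposition G h : {in G, forall e, #|e| == 2} ->
  orientation G h -> (forall w, ~~ odd (indeg G h w)) -> exists s, star_decomposition G s.
Proof.
have [k] := ubnP #|G|; elim: k G => // k IH G lt_Gk G2 hG evenh.
have [-> | [e eG]] := set_0Vmem G; first by exists [::]; split; rewrite ?big_nil.
have [e' e'Ge he'] := second_edge_at_head eG (evenh (h e)).
have e'G : e' \in G by case/setD1P: e'Ge.
set v := h e in he'.
have [a av ea] := edge_other_end (G2 _ eG) (hG _ eG).
have [b bv eb] : exists2 b, b != v & e' = [set v; b].
  by rewrite -he'; apply: edge_other_end (G2 _ e'G) (hG _ e'G).
have ab : a != b by apply: contraTneq e'Ge => ab; rewrite eb -ab -ea !inE eqxx.
set G' := G :\ e :\ e'.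
have [s [s_valid s_disj G's]] : exists s, star_decomposition G' s.
  apply: IH => [|f /setD1P[_ /setD1P[_ /G2]] //|f /setD1P[_ /setD1P[_ /hG]] //|w].
    by move: lt_Gk; rewrite (cardsD1 e G) (cardsD1 e' (G :\ e)) eG e'Ge -/G'; lia.
  have := evenh w; rewrite (indegD1 _ _ eG) (indegD1 _ _ e'Ge) he' !oddD !oddb.
  by rewrite addbA addbb.
have edges_vab : star_edges (v, a, b) = [set e; e'] by rewrite /= -ea -eb.
exists ((v, a, b) :: s); split.
- by rewrite /= s_valid andbT eq_sym av eq_sym bv ab.
- rewrite /= s_disj andbT; apply/allP => t ts; rewrite /disjoint_stars edges_vab.
  have : star_edges t \subset G' by rewrite G's bigcup_seq (bigcup_sup t).
  rewrite disjoint_sym disjoints_subset => /subset_trans; apply.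
  by apply/subsetP => f; rewrite !inE => /and3P[fe' fe _]; rewrite negb_or fe fe'.
- by rewrite big_cons -G's edges_vab -setUA setD1K // setD1K.
Qed.

Lemma star_decomposition_exists G (x0 : 'I_n) : {in G, forall e, #|e| == 2} ->
    ~~ odd #|G| -> {in cover G &, forall u v, connect (edge_rel G) u v} ->
  exists s, star_decomposition G s.
Proof.
move=> G2 evenG connG.
have [h0 h0G] : exists h, orientation G h.
  by apply: (orientation_exists x0); apply/negP => /G2; rewrite cards0.
have [h hG evenh] := even_orientation evenG connG h0G.
exact: even_orientation_star_decomposition G2 hG evenh.
Qed.

Lemma card_star_edges t : valid_star t -> #|star_edges t| = 2.
Proof.
case: t => [[c a] b] /and3P[ca cb ab] /=; rewrite cards2.
suff /negPf-> : [set c; a] != [set c; b] by [].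
apply: contra ab => /eqP/setP/(_ b); rewrite !inE eqxx orbT.
by case/orP=> /eqP ba; [rewrite -ba eqxx in cb | rewrite ba].
Qed.

Lemma star_edges_is_edge t e : valid_star t -> e \in star_edges t -> is_edge e.
Proof.
case: t => [[c a] b] /and3P[ca cb _] /=.
by rewrite !inE => /orP[] /eqP ->; rewrite /is_edge cards2 ?ca ?cb.
Qed.

Definition design_edges k (A : 'I_k -> star n) := \bigcup_i star_edges (A i).

Lemma card_design_edges k (A : 'I_k -> star n) :
  partial_2star_design A -> #|design_edges A| = k * 2.
Proof.
case=> A_valid A_disj; rewrite -sum1_card partition_disjoint_bigcup.
  rewrite (eq_bigr (fun _ => 2)) ?sum_nat_const ?card_ord // => i _.
  by rewrite sum1_card card_star_edges.
by move=> i j /A_disj /eqP; rewrite setI_eq0.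
Qed.

Lemma completable_of_seq k (A : 'I_k -> star n) s :
    all (@valid_star n) s -> pairwise disjoint_stars s -> (forall i, A i \in s) ->
    (forall e, is_edge e -> exists2 t, t \in s & e \in star_edges t) ->
  completable A.
Proof.
move=> s_valid s_disj As s_cover; exists (size s), (tnth (in_tuple s)); split; [split|split].
- by move=> j; apply: (allP s_valid); apply: mem_tnth.
- have lt_disj (i j : 'I_(size s)) : i < j ->
      star_edges (tnth (in_tuple s) i) :&: star_edges (tnth (in_tuple s) j) = set0.
    (* an opaque default, so that rewriting with [tnth_nth x0] terminates *)
    have x0 : star n := tnth (in_tuple s) i.
    move=> ij; apply/eqP; rewrite setI_eq0 !(tnth_nth x0).
    by move/(pairwiseP x0): s_disj; apply; rewrite ?inE.
  move=> i j; rewrite neq_ltn; case/orP => [/lt_disj // | /lt_disj].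
  by rewrite setIC.
- move=> i; have /tnthP[j ->] : A i \in in_tuple s by apply: As.
  by exists j.
- by move=> e /s_cover[t /(tnthP (in_tuple s))[j ->]]; exists j.
Qed.

Lemma completable_of_compl_decomposition k (A : 'I_k -> star n) s :
    partial_2star_design A -> star_decomposition (compl_graph (design_edges A)) s ->
  completable A.
Proof.
case=> A_valid A_disj [s_valid s_disj H_s].
apply: (@completable_of_seq _ _ (codom A ++ s)) => [||i|e e_edge].
- by rewrite all_cat s_valid andbT; apply/allP => _ /codomP[i ->].
- rewrite pairwise_cat s_disj andbT; apply/andP; split.
    apply/allrelP => _ t /codomP[i ->] ts.
    have : star_edges t \subset compl_graph (design_edges A).
      by rewrite H_s bigcup_seq (bigcup_sup t).
    rewrite /disjoint_stars disjoint_sym disjoints_subset => /subset_trans; apply.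
    by apply: subset_trans (subsetDr _ _) _; rewrite setCS (bigcup_sup i).
  rewrite codomE pairwise_map; move: (enum_uniq 'I_k); rewrite uniq_pairwise.
  by apply: sub_pairwise => i j /A_disj /eqP; rewrite setI_eq0.
- by rewrite mem_cat codom_f.
- have [/bigcupP[i _ e_Ai] | e_notA] := boolP (e \in design_edges A).
    by exists (A i); rewrite // mem_cat codom_f.
  have : e \in compl_graph (design_edges A) by rewrite !inE e_notA.
  rewrite H_s bigcup_seq => /bigcupP[t ts e_t].
  by exists t; rewrite // mem_cat ts orbT.
Qed.

End Stars.

Theorem lemma6 (n : nat) (A : 'I_(n - 3) -> star n) :
  two_admissible n -> 1 < n -> partial_2star_design A -> completable A.
Proof.
move=> adm n_gt1 A_design.
have n_gt3 : 3 < n by move: adm n_gt1; case: n {A A_design} => [|[|[|[|m]]]].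
set M := design_edges A.
have card_M : #|M| = (n - 3) * 2 := card_design_edges A_design.
have M_edges : M \subset [set e : {set 'I_n} | #|e| == 2].
  apply/subsetP => e /bigcupP[i _ e_Ai]; rewrite inE.
  by apply: star_edges_is_edge e_Ai; case: A_design.
have even_H : ~~ odd #|compl_graph M|.
  have := card_compl_graph M_edges; rewrite card_ord card_M => /(congr1 odd).
  by rewrite oddD oddM andbF /= => ->; case/andP: adm.
have small_M : #|M| + 4 < 2 * #|'I_n| by rewrite card_ord card_M; lia.
have [s s_decomp] := star_decomposition_exists (Ordinal (ltnW n_gt1))
  (@compl_graph_card2 _ M) even_H (compl_graph_connected small_M).
exact: completable_of_compl_decomposition s_decomp.
Qed.
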